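(* Let $L$ be a Hausdorff co-Heyting algebra and $I$ an ideal of $L$. The quotient co-Heyting algebra $L/I$ is Hausdorff if and only if $I$ is closed in the codimetric topology of $L$. In particular, the quotient of a Hausdorff co-Heyting algebra by a principal ideal is Hausdorff.
   Context: A co-Heyting algebra is a bounded distributive lattice $(L,0,1,\vee,\wedge)$ such that $a-b=\min\{c\in L: a\le b\vee c\}$ exists for all $a,b$. Let $a\triangle b=(a-b)\vee(b-a)$; for an ideal $I$, $L/I$ is the quotient by the congruence $a\equiv_I b\iff a\triangle b\in I$, itself a co-Heyting algebra. $\operatorname{Spec}L$ is the set of prime filters ordered by inclusion; the height of a prime filter is its foundation rank there; $\operatorname{codim}_L a=\min\{\operatorname{height}\mathfrak p: a\in\mathfrak p\in\operatorname{Spec}L\}$ ($+\infty$ if none). The codimetric pseudometric is $\operatorname{dist}_L(a,b)=2^{-\operatorname{codim}_L(a\triangle b)}$ if $\operatorname{codim}_L(a\triangle b)$ is finite and $0$ otherwise; the codimetric topology is the topology it defines. $L$ is called Hausdorff if its codimetric topology is Hausdorff, equivalently if every nonzero element of $L$ has finite codimension. *)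

From Stdlib Require Import Reals Lra Arith Wf_nat Classical ClassicalEpsilon.
Open Scope R_scope.

Record CoHOps (T : Type) := {
  cbot : T; ctop : T;
  cjoin : T -> T -> T; cmeet : T -> T -> T;
  cdiff : T -> T -> T
}.
Arguments cbot {T}. Arguments ctop {T}. Arguments cjoin {T}.
Arguments cmeet {T}. Arguments cdiff {T}.

Section CoH.
Context {T : Type} (L : CoHOps T).

Local Notation "a ∨ b" := (cjoin L a b) (at level 50).
Local Notation "a ∧ b" := (cmeet L a b) (at level 40).

Definition cle (a b : T) : Prop := cjoin L a b = b.

Definition is_coHeyting : Prop :=
  (forall a b c, cjoin L a (cjoin L b c) = cjoin L (cjoin L a b) c) /\
  (forall a b c, cmeet L a (cmeet L b c) = cmeet L (cmeet L a b) c) /\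
  (forall a b, cjoin L a b = cjoin L b a) /\
  (forall a b, cmeet L a b = cmeet L b a) /\
  (forall a b, cjoin L a (cmeet L a b) = a) /\
  (forall a b, cmeet L a (cjoin L a b) = a) /\
  (forall a b c, cmeet L a (cjoin L b c) = cjoin L (cmeet L a b) (cmeet L a c)) /\
  (forall a, cjoin L a (cbot L) = a) /\
  (forall a, cmeet L a (ctop L) = a) /\
  (forall a b, cle a (cjoin L b (cdiff L a b)) /\
               forall c, cle a (cjoin L b c) -> cle (cdiff L a b) c).

Definition symd (a b : T) : T := cjoin L (cdiff L a b) (cdiff L b a).

Definition is_ideal (I : T -> Prop) : Prop :=
  I (cbot L) /\
  (forall a b, cle a b -> I b -> I a) /\
  (forall a b, I a -> I b -> I (cjoin L a b)).

Definition principal_ideal (a : T) : T -> Prop := fun b => cle b a.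

Definition prime_filter (F : T -> Prop) : Prop :=
  F (ctop L) /\ ~ F (cbot L) /\
  (forall a b, cle a b -> F a -> F b) /\
  (forall a b, F a -> F b -> F (cmeet L a b)) /\
  (forall a b, F (cjoin L a b) -> F a \/ F b).

Definition sincl (F G : T -> Prop) : Prop :=
  (forall x, F x -> G x) /\ exists x, G x /\ ~ F x.

(** height_le n p : the foundation rank (height) of p in Spec L is <= n,
    i.e. every prime filter strictly below p has height <= n-1
    (and for n = 0, p is minimal). *)
Fixpoint height_le (n : nat) (p : T -> Prop) : Prop :=
  forall q, prime_filter q -> sincl q p ->
    match n with O => False | S m => height_le m q end.

(** "codim a <= n": some prime filter containing a has height <= n *)
Definition codim_le (a : T) (n : nat) : Prop :=
  exists p, prime_filter p /\ p a /\ height_le n p.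

Lemma least_nat (P : nat -> Prop) :
  (exists n, P n) -> exists n, P n /\ forall m, P m -> (n <= m)%nat.
Proof.
  intros H.
  destruct (dec_inh_nat_subset_has_unique_least_element P
              (fun n => classic (P n)) H) as [n [[Hn Hl] _]].
  exists n; split; assumption.
Qed.

(** codimension of a, in nat ∪ {+oo} (None = +oo) *)
Definition codim (a : T) : option nat :=
  match excluded_middle_informative (exists n, codim_le a n) with
  | left h => Some (proj1_sig (constructive_indefinite_description _
                                 (least_nat _ h)))
  | right _ => None
  end.

Definition cdist (a b : T) : R :=
  match codim (symd a b) with
  | Some n => / (2 ^ n)
  | None => 0
  end.

Definition copen (U : T -> Prop) : Prop :=
  forall x, U x -> exists e, e > 0 /\ forall y, cdist x y < e -> U y.

Definition cclosed (C : T -> Prop) : Prop := copen (fun x => ~ C x).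

Definition Hausdorff : Prop :=
  forall x y, x <> y ->
    exists U V, copen U /\ copen V /\ U x /\ V y /\ forall z, ~ (U z /\ V z).

Definition cong (I : T -> Prop) (a b : T) : Prop := I (symd a b).

Definition quot (I : T -> Prop) : Type :=
  { C : T -> Prop | exists a, C = cong I a }.

Definition qcls (I : T -> Prop) (a : T) : quot I :=
  exist _ (cong I a) (ex_intro _ a eq_refl).

Definition qrep (I : T -> Prop) (X : quot I) : T :=
  proj1_sig (constructive_indefinite_description _ (proj2_sig X)).

Definition quot_ops (I : T -> Prop) : CoHOps (quot I) := {|
  cbot := qcls I (cbot L);
  ctop := qcls I (ctop L);
  cjoin := fun X Y => qcls I (cjoin L (qrep I X) (qrep I Y));
  cmeet := fun X Y => qcls I (cmeet L (qrep I X) (qrep I Y));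
  cdiff := fun X Y => qcls I (cdiff L (qrep I X) (qrep I Y)) |}.

End CoH.

From Stdlib Require Import Reals Lra Lia Classical ClassicalEpsilon.
From Stdlib Require Import FunctionalExtensionality PropExtensionality ProofIrrelevance.
From mathcomp Require boolp classical_sets.

(* A co-Heyting algebra is Hausdorff exactly when every nonzero element has finite
   codimension.  The prime filters of L/I are the prime filters of L missing I, with
   the same heights, so L/I is Hausdorff iff every a ∉ I lies in a prime filter of
   finite height missing I.  A prime filter p ∋ a of height ≤ n missing I shows that
   the codimetric ball of radius 2^-n around a misses I, since a ≤ y ∨ (a △ y).
   Conversely, if that ball misses I, every a - y with y ∈ I has codimension ≤ n;
   separating the filter generated by these differences from the ideal generated by
   I and the elements of codimension > n yields a prime filter p ∋ a missing I all of
   whose elements have codimension ≤ n, and such a p has height ≤ n.  Finally, a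
   principal ideal ↓c is closed in a Hausdorff L: for x ∉ ↓c, the nonzero element
   x - c has finite codimension and lies below x △ y for every y ≤ c. *)

Existing Class is_coHeyting.

Section Lattice.
Context {T : Type} {L : CoHOps T} {HL : is_coHeyting L}.

Local Notation "a ⊔ b" := (cjoin L a b) (at level 50, left associativity).
Local Notation "a ⊓ b" := (cmeet L a b) (at level 40, left associativity).
Local Notation "a ∖ b" := (cdiff L a b) (at level 35).
Local Notation "a ⊑ b" := (cle L a b) (at level 70).
Local Notation "⊥" := (cbot L).
Local Notation "⊤" := (ctop L).
Local Notation "a △ b" := (symd L a b) (at level 35).

Lemma join_assoc a b c : a ⊔ (b ⊔ c) = a ⊔ b ⊔ c. Proof. apply HL. Qed.
Lemma meet_assoc a b c : a ⊓ (b ⊓ c) = a ⊓ b ⊓ c. Proof. apply HL. Qed.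
Lemma join_comm a b : a ⊔ b = b ⊔ a. Proof. apply HL. Qed.
Lemma meet_comm a b : a ⊓ b = b ⊓ a. Proof. apply HL. Qed.
Lemma join_meet_absorb a b : a ⊔ a ⊓ b = a. Proof. apply HL. Qed.
Lemma meet_join_absorb a b : a ⊓ (a ⊔ b) = a. Proof. apply HL. Qed.
Lemma meet_join_distr a b c : a ⊓ (b ⊔ c) = a ⊓ b ⊔ a ⊓ c. Proof. apply HL. Qed.
Lemma join_bot a : a ⊔ ⊥ = a. Proof. apply HL. Qed.
Lemma meet_top a : a ⊓ ⊤ = a. Proof. apply HL. Qed.
Lemma le_join_diff a b : a ⊑ b ⊔ a ∖ b. Proof. apply HL. Qed.
Lemma diff_least a b c : a ⊑ b ⊔ c -> a ∖ b ⊑ c. Proof. apply HL. Qed.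

Lemma join_idem a : a ⊔ a = a.
Proof. rewrite <- (meet_join_absorb a a) at 2. apply join_meet_absorb. Qed.

Lemma le_refl a : a ⊑ a. Proof. apply join_idem. Qed.

Lemma le_trans b a c : a ⊑ b -> b ⊑ c -> a ⊑ c.
Proof. unfold cle; intros Hab Hbc. rewrite <- Hbc, join_assoc, Hab. reflexivity. Qed.

Lemma le_antisym a b : a ⊑ b -> b ⊑ a -> a = b.
Proof. unfold cle; intros Hab Hba. rewrite <- Hab, join_comm, Hba. reflexivity. Qed.

Lemma le_joinl a b : a ⊑ a ⊔ b.
Proof. unfold cle. rewrite join_assoc, join_idem. reflexivity. Qed.

Lemma le_joinr a b : b ⊑ a ⊔ b.
Proof. rewrite join_comm. apply le_joinl. Qed.

Lemma join_le a b c : a ⊑ c -> b ⊑ c -> a ⊔ b ⊑ c.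
Proof. unfold cle; intros Hac Hbc. rewrite <- join_assoc, Hbc, Hac. reflexivity. Qed.

Lemma le_join_l a b c : a ⊑ b -> a ⊑ b ⊔ c.
Proof. intro H. apply le_trans with b; auto using le_joinl. Qed.

Lemma le_join_r a b c : a ⊑ c -> a ⊑ b ⊔ c.
Proof. intro H. apply le_trans with c; auto using le_joinr. Qed.

Lemma le_meet_eq a b : a ⊑ b <-> a ⊓ b = a.
Proof.
  unfold cle; split; intro H.
  - rewrite <- H. apply meet_join_absorb.
  - rewrite <- H, join_comm, meet_comm. apply join_meet_absorb.
Qed.

Lemma le_meetl a b : a ⊓ b ⊑ a.
Proof.
  apply le_meet_eq. rewrite meet_comm, meet_assoc.
  rewrite <- (join_meet_absorb a b) at 2. rewrite meet_join_absorb. reflexivity.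
Qed.

Lemma le_meetr a b : a ⊓ b ⊑ b.
Proof. rewrite meet_comm. apply le_meetl. Qed.

Lemma meet_ge a b c : c ⊑ a -> c ⊑ b -> c ⊑ a ⊓ b.
Proof. rewrite !le_meet_eq; intros Hca Hcb. rewrite meet_assoc, Hca, Hcb. reflexivity. Qed.

Lemma bot_le a : ⊥ ⊑ a.
Proof. unfold cle. rewrite join_comm. apply join_bot. Qed.

Lemma le_top a : a ⊑ ⊤.
Proof. apply le_meet_eq, meet_top. Qed.

Lemma le_bot a : a ⊑ ⊥ -> a = ⊥.
Proof. intro H. apply le_antisym; auto using bot_le. Qed.

Lemma join_mono a b c d : a ⊑ c -> b ⊑ d -> a ⊔ b ⊑ c ⊔ d.
Proof. intros; apply join_le; [apply le_join_l | apply le_join_r]; assumption. Qed.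

Lemma meet_mono a b c d : a ⊑ c -> b ⊑ d -> a ⊓ b ⊑ c ⊓ d.
Proof.
  intros; apply meet_ge; [apply le_trans with a | apply le_trans with b];
    auto using le_meetl, le_meetr.
Qed.

Lemma diff_le_iff a b c : a ∖ b ⊑ c <-> a ⊑ b ⊔ c.
Proof.
  split; [intro H | apply diff_least].
  apply le_trans with (b ⊔ a ∖ b); auto using le_join_diff, join_mono, le_refl.
Qed.

Lemma diff_le a b : a ∖ b ⊑ a.
Proof. apply diff_le_iff, le_joinr. Qed.

Lemma diff_eq_bot a b : a ⊑ b -> a ∖ b = ⊥.
Proof. intro H. apply le_bot, diff_le_iff. rewrite join_bot. exact H. Qed.

Lemma diff_bot a : a ∖ ⊥ = a.
Proof.
  apply le_antisym; [apply diff_le|].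
  apply le_trans with (⊥ ⊔ a ∖ ⊥); [apply le_join_diff|].
  rewrite join_comm, join_bot. apply le_refl.
Qed.

Lemma diff_antitone a b c : b ⊑ c -> a ∖ c ⊑ a ∖ b.
Proof.
  intro H. apply diff_le_iff, le_trans with (b ⊔ a ∖ b);
    auto using le_join_diff, join_mono, le_refl.
Qed.

Lemma symd_comm a b : a △ b = b △ a.
Proof. apply join_comm. Qed.

Lemma symd_self a : a △ a = ⊥.
Proof. unfold symd. rewrite diff_eq_bot by apply le_refl. apply join_bot. Qed.

Lemma symd_bot a : a △ ⊥ = a.
Proof. unfold symd. rewrite diff_bot, (diff_eq_bot ⊥ a) by apply bot_le. apply join_bot. Qed.

Lemma le_join_symd a b : a ⊑ b ⊔ a △ b.
Proof.
  apply le_trans with (b ⊔ a ∖ b);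
    [apply le_join_diff | apply join_mono, le_joinl; apply le_refl].
Qed.

Lemma symd_eq_bot a b : a △ b = ⊥ -> a = b.
Proof.
  intro H. apply le_antisym.
  - rewrite <- (join_bot b), <- H. apply le_join_symd.
  - rewrite <- (join_bot a), <- H, symd_comm. apply le_join_symd.
Qed.

Lemma le_join_symd_chain x y w : x ⊑ w ⊔ (x △ y ⊔ y △ w).
Proof.
  apply le_trans with (y ⊔ x △ y); [apply le_join_symd|].
  apply le_trans with (w ⊔ y △ w ⊔ x △ y);
    [apply join_mono; [apply le_join_symd | apply le_refl]|].
  auto 6 using le_refl, join_le, le_join_l, le_join_r.
Qed.

Lemma symd_triangle x y w : x △ w ⊑ x △ y ⊔ y △ w.
Proof.
  apply join_le; apply diff_le_iff; [apply le_join_symd_chain|].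
  rewrite (symd_comm x y), (symd_comm y w), (join_comm (y △ x)). apply le_join_symd_chain.
Qed.

Lemma symd_meet_le a y : a △ (a ⊓ y) ⊑ a ∖ y.
Proof.
  unfold symd. rewrite (diff_eq_bot (a ⊓ y) a), join_bot by apply le_meetl.
  apply diff_le_iff, le_trans with (a ⊓ (y ⊔ a ∖ y)).
  - apply meet_ge; [apply le_refl | apply le_join_diff].
  - rewrite meet_join_distr. apply join_mono; [apply le_refl | apply le_meetr].
Qed.

End Lattice.

Ltac solve_join_le :=
  repeat apply join_le; auto 6 using le_refl, le_join_l, le_join_r, le_meetl, le_meetr.

Local Notation "A ⊆ B" := (forall x, A x -> B x) (at level 70, no associativity).

Lemma zorn_predicates {U : Type} (P : (U -> Prop) -> Prop) (G0 : U -> Prop) :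
  P G0 ->
  (forall C : (U -> Prop) -> Prop, (exists G, C G) -> (forall G, C G -> P G) ->
     (forall G H, C G -> C H -> G ⊆ H \/ H ⊆ G) ->
     P (fun x => exists G, C G /\ G x)) ->
  exists G, P G /\ forall H, P H -> G ⊆ H -> H ⊆ G.
Proof.
  intros HG0 Hchain.
  pose (R := fun G H : {G | P G} => boolp.asbool (proj1_sig G ⊆ proj1_sig H)).
  destruct (@classical_sets.ZL_preorder _ (exist _ G0 HG0) R) as [[G HG] Hmax].
  - intro G. apply boolp.asboolT. auto.
  - intros G1 G2 G3 H12 H23. apply boolp.asboolT. intros x Hx.
    apply (boolp.asboolW H23), (boolp.asboolW H12), Hx.
  - intros A HA. destruct (classic (exists G, A G)) as [[G1 HG1] | Hempty].
    + pose (C := fun G => exists s : {G | P G}, A s /\ proj1_sig s = G).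
      assert (HC : P (fun x => exists G, C G /\ G x)).
      { apply Hchain.
        - exists (proj1_sig G1), G1. auto.
        - intros G [s [_ <-]]. exact (proj2_sig s).
        - intros G H [s [Hs <-]] [t [Ht <-]].
          destruct (HA s t Hs Ht); [left | right]; apply boolp.asboolW; assumption. }
      exists (exist _ _ HC). intros s Hs. apply boolp.asboolT. intros x Hx.
      exists (proj1_sig s). split; [exists s; auto | exact Hx].
    + exists (exist _ G0 HG0). intros s Hs. exfalso. eauto.
  - exists G. split; [exact HG|]. intros H HH HGH.
    apply boolp.asboolW, (Hmax (exist _ H HH)), boolp.asboolT, HGH.
Qed.

Lemma sincl_pullback {A B : Type} (f : A -> B) (P P' : B -> Prop) :
  (forall y, exists x, y = f x) ->
  sincl (fun x => P' (f x)) (fun x => P (f x)) <-> sincl P' P.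
Proof.
  intro Hsurj. split.
  - intros [Hsub [x [HPx HP'x]]]. split; [|eauto].
    intros y Hy. destruct (Hsurj y) as [x' ->]. auto.
  - intros [Hsub [y [HPy HP'y]]]. split; [auto|].
    destruct (Hsurj y) as [x ->]. eauto.
Qed.

Lemma inv_pow2_pos N : 0 < / 2 ^ N.
Proof. apply Rinv_0_lt_compat, pow_lt. lra. Qed.

Lemma inv_pow2_lt m N : / 2 ^ m < / 2 ^ N <-> (N < m)%nat.
Proof.
  split; intro H.
  - destruct (Nat.lt_ge_cases N m) as [Hlt | Hge]; [exact Hlt|].
    assert (2 ^ m <= 2 ^ N) by (apply Rle_pow; lra || exact Hge).
    assert (/ 2 ^ N <= / 2 ^ m) by (apply Rinv_le_contravar; [apply pow_lt; lra | assumption]).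
    lra.
  - apply Rinv_lt_contravar.
    + apply Rmult_lt_0_compat; apply pow_lt; lra.
    + apply Rlt_pow; [lra | exact H].
Qed.

Lemma inv_pow2_small e : 0 < e -> exists N, / 2 ^ N < e.
Proof.
  intro He. destruct (Pow_x_infinity 2) with (b := / e + 1) as [N HN].
  - rewrite Rabs_right; lra.
  - exists N. specialize (HN N (le_n N)).
    rewrite Rabs_right in HN by (left; apply pow_lt; lra).
    assert (0 < / e) by (apply Rinv_0_lt_compat; lra).
    rewrite <- (Rinv_inv e). apply Rinv_lt_contravar; [apply Rmult_lt_0_compat, pow_lt|]; lra.
Qed.

Section Codimension.
Context {St : Type} {Mo : CoHOps St}.

Section PrimeFilter.
Context {p : St -> Prop} (Hp : prime_filter Mo p).

Lemma prime_filter_top : p (ctop Mo). Proof. apply Hp. Qed.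
Lemma prime_filter_not_bot : ~ p (cbot Mo). Proof. apply Hp. Qed.
Lemma prime_filter_up a b : cle Mo a b -> p a -> p b. Proof. apply Hp. Qed.
Lemma prime_filter_meet a b : p a -> p b -> p (cmeet Mo a b). Proof. apply Hp. Qed.
Lemma prime_filter_join a b : p (cjoin Mo a b) -> p a \/ p b. Proof. apply Hp. Qed.

End PrimeFilter.

Lemma height_le_succ n p : height_le Mo n p -> height_le Mo (S n) p.
Proof.
  revert p; induction n as [|n IH]; intros p H q Hq Hqp; specialize (H q Hq Hqp).
  - destruct H.
  - exact (IH q H).
Qed.

Lemma codim_le_mono a m n : (m <= n)%nat -> codim_le Mo a m -> codim_le Mo a n.
Proof.
  intros Hmn [p [Hp [Ha Hh]]]. exists p. split; [exact Hp | split; [exact Ha|]].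
  induction Hmn; auto using height_le_succ.
Qed.

Lemma codim_le_up a b n : cle Mo a b -> codim_le Mo a n -> codim_le Mo b n.
Proof.
  intros Hab [p [Hp [Ha Hh]]]. exists p.
  split; [exact Hp | split; [exact (prime_filter_up Hp a b Hab Ha) | exact Hh]].
Qed.

Lemma codim_le_join a b n :
  codim_le Mo (cjoin Mo a b) n -> codim_le Mo a n \/ codim_le Mo b n.
Proof.
  intros [p [Hp [Hab Hh]]].
  destruct (prime_filter_join Hp a b Hab); [left | right]; exists p; auto.
Qed.

Lemma not_codim_le_bot n : ~ codim_le Mo (cbot Mo) n.
Proof. intros [p [Hp [Hbot _]]]. exact (prime_filter_not_bot Hp Hbot). Qed.

Lemma codim_le_iff a N :
  codim_le Mo a N <-> exists m, codim Mo a = Some m /\ (m <= N)%nat.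
Proof.
  unfold codim. destruct excluded_middle_informative as [Hfin | Hinf].
  - destruct constructive_indefinite_description as [m [Hm Hmin]]. simpl. split.
    + intro HN. exists m. auto.
    + intros [m' [E Hle]]. injection E as <-. exact (codim_le_mono a m N Hle Hm).
  - split; [intro HN; exfalso; eauto | intros [m [E _]]; discriminate].
Qed.

Lemma cdist_lt_pow x y N :
  cdist Mo x y < / 2 ^ N <-> ~ codim_le Mo (symd Mo x y) N.
Proof.
  unfold cdist. rewrite codim_le_iff. destruct (codim Mo (symd Mo x y)) as [m|].
  - rewrite inv_pow2_lt. split.
    + intros Hlt [m' [E Hle]]. injection E as <-. lia.
    + intro H. destruct (Nat.lt_ge_cases N m) as [Hlt | Hge]; [exact Hlt|].
      exfalso. eauto.
  - split; [intros _ [m [E _]]; discriminate | intros _; apply inv_pow2_pos].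
Qed.

Definition cball (x : St) (N : nat) : St -> Prop :=
  fun y => ~ codim_le Mo (symd Mo x y) N.

Lemma copen_iff_cball U : copen Mo U <-> forall x, U x -> exists N, cball x N ⊆ U.
Proof.
  unfold copen, cball. split.
  - intros H x Hx. destruct (H x Hx) as [e [He Hball]].
    destruct (inv_pow2_small e He) as [N HN]. exists N.
    intros y Hy. apply Hball. apply cdist_lt_pow in Hy. lra.
  - intros H x Hx. destruct (H x Hx) as [N HN]. exists (/ 2 ^ N).
    split; [apply inv_pow2_pos|]. intros y Hy. apply HN, cdist_lt_pow, Hy.
Qed.

End Codimension.

Arguments cball {St} Mo x N _.

(* [phi] embeds the spectrum of [N] onto a down-closed part of the spectrum of [M]. *)
Lemma height_le_transfer {S T : Type} (M : CoHOps S) (N : CoHOps T)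
    (phi : (T -> Prop) -> (S -> Prop)) :
  (forall P, prime_filter N P -> prime_filter M (phi P)) ->
  (forall P P', sincl (phi P') (phi P) <-> sincl P' P) ->
  (forall P q, prime_filter N P -> prime_filter M q -> sincl q (phi P) ->
     exists P', prime_filter N P' /\ q = phi P') ->
  forall n P, prime_filter N P -> (height_le N n P <-> height_le M n (phi P)).
Proof.
  intros Hprime Hsincl Hdown n.
  induction n as [|n IH]; intros P HP; split; intro H.
  - intros q Hq Hqp. destruct (Hdown P q HP Hq Hqp) as [P' [HP' ->]].
    exact (H P' HP' (proj1 (Hsincl P P') Hqp)).
  - intros P' HP' HP'P. exact (H (phi P') (Hprime P' HP') (proj2 (Hsincl P P') HP'P)).
  - intros q Hq Hqp. destruct (Hdown P q HP Hq Hqp) as [P' [HP' ->]].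
    apply IH; [exact HP'|]. exact (H P' HP' (proj1 (Hsincl P P') Hqp)).
  - intros P' HP' HP'P. apply IH; [exact HP'|].
    exact (H (phi P') (Hprime P' HP') (proj2 (Hsincl P P') HP'P)).
Qed.

Section Spectrum.
Context {T : Type} {L : CoHOps T} {HL : is_coHeyting L}.

Local Notation "a ⊔ b" := (cjoin L a b) (at level 50, left associativity).
Local Notation "a ⊓ b" := (cmeet L a b) (at level 40, left associativity).
Local Notation "a ∖ b" := (cdiff L a b) (at level 35).
Local Notation "a ⊑ b" := (cle L a b) (at level 70).
Local Notation "⊥" := (cbot L).
Local Notation "⊤" := (ctop L).
Local Notation "a △ b" := (symd L a b) (at level 35).

Definition is_filter (F : T -> Prop) : Prop :=
  F ⊤ /\ (forall a b, a ⊑ b -> F a -> F b) /\ (forall a b, F a -> F b -> F (a ⊓ b)).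

Definition ideal_join (I K : T -> Prop) : T -> Prop :=
  fun x => exists i k, I i /\ K k /\ x ⊑ i ⊔ k.

Lemma principal_filter_filter a : is_filter (fun x => a ⊑ x).
Proof.
  split; [apply le_top | split].
  - intros x y Hxy Hax. apply le_trans with x; assumption.
  - intros x y Hax Hay. apply meet_ge; assumption.
Qed.

Lemma principal_ideal_ideal a : is_ideal L (principal_ideal L a).
Proof.
  split; [apply bot_le | split].
  - intros x y Hxy Hya. apply le_trans with y; assumption.
  - intros x y Hxa Hya. apply join_le; assumption.
Qed.

Lemma prime_filter_compl_ideal p : prime_filter L p -> is_ideal L (fun x => ~ p x).
Proof.
  intro Hp. split; [apply (prime_filter_not_bot Hp) | split].
  - intros a b Hab Hb Ha. exact (Hb (prime_filter_up Hp a b Hab Ha)).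
  - intros a b Ha Hb Hab. destruct (prime_filter_join Hp a b Hab); contradiction.
Qed.

Lemma codim_gt_ideal N : is_ideal L (fun x => ~ codim_le L x N).
Proof.
  split; [apply not_codim_le_bot | split].
  - intros a b Hab Hb Ha. exact (Hb (codim_le_up a b N Hab Ha)).
  - intros a b Ha Hb Hab. destruct (codim_le_join a b N Hab); contradiction.
Qed.

Lemma ideal_join_ideal I K : is_ideal L I -> is_ideal L K -> is_ideal L (ideal_join I K).
Proof.
  intros HI HK. split; [|split].
  - exists ⊥, ⊥. split; [apply HI | split; [apply HK | apply bot_le]].
  - intros a b Hab [i [k [Hi [Hk Hb]]]]. exists i, k.
    split; [exact Hi | split; [exact Hk | apply le_trans with b; assumption]].
  - intros a b [i [k [Hi [Hk Ha]]]] [i' [k' [Hi' [Hk' Hb]]]]. exists (i ⊔ i'), (k ⊔ k').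
    split; [apply HI; assumption | split; [apply HK; assumption|]].
    apply le_trans with (i ⊔ k ⊔ (i' ⊔ k')); [apply join_mono; assumption | solve_join_le].
Qed.

Lemma ideal_join_l I K x : is_ideal L K -> I x -> ideal_join I K x.
Proof. intros HK Hx. exists x, ⊥. split; [exact Hx | split; [apply HK | apply le_joinl]]. Qed.

Lemma ideal_join_r I K x : is_ideal L I -> K x -> ideal_join I K x.
Proof. intros HI Hx. exists ⊥, x. split; [apply HI | split; [exact Hx | apply le_joinr]]. Qed.

Lemma filter_chain_union (C : (T -> Prop) -> Prop) :
  (exists G, C G) -> (forall G, C G -> is_filter G) ->
  (forall G H, C G -> C H -> G ⊆ H \/ H ⊆ G) ->
  is_filter (fun x => exists G, C G /\ G x).
Proof.
  intros [G0 HG0] Hfilter Hchain. split; [|split].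
  - exists G0. split; [exact HG0 | apply (Hfilter G0 HG0)].
  - intros a b Hab [G [HG Ga]]. exists G.
    split; [exact HG | apply (Hfilter G HG) with a; assumption].
  - intros a b [G [HG Ga]] [H [HH Hb]].
    destruct (Hchain G H HG HH) as [HGH | HHG].
    + exists H. split; [exact HH | apply (Hfilter H HH); auto].
    + exists G. split; [exact HG | apply (Hfilter G HG); auto].
Qed.

Lemma filter_adjoin G d : is_filter G -> is_filter (fun x => exists g, G g /\ g ⊓ d ⊑ x).
Proof.
  intros HG. split; [|split].
  - exists ⊤. split; [apply HG | apply le_top].
  - intros a b Hab [g [Hg Ha]]. exists g. split; [exact Hg | apply le_trans with a; assumption].
  - intros a b [g [Hg Ha]] [g' [Hg' Hb]]. exists (g ⊓ g'). split; [apply HG; assumption|].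
    apply meet_ge; [apply le_trans with (g ⊓ d) | apply le_trans with (g' ⊓ d)];
      auto using meet_mono, le_meetl, le_meetr, le_refl.
Qed.

Section MaximalFilter.
Variables (G K : T -> Prop).
Hypotheses (HK : is_ideal L K) (HG : is_filter G) (HGK : forall x, G x -> ~ K x).
Hypothesis HGmax :
  forall H, is_filter H -> G ⊆ H -> (forall x, H x -> ~ K x) -> H ⊆ G.

Lemma maximal_filter_escape d : ~ G d -> exists g, G g /\ K (g ⊓ d).
Proof.
  intro Hd. apply NNPP. intro Hno.
  apply Hd, (HGmax _ (filter_adjoin G d HG)).
  - intros x Hx. exists x. split; [exact Hx | apply le_meetl].
  - intros x [g [Hg Hgx]] Kx. apply Hno. exists g. split; [exact Hg | apply HK with x; assumption].
  - exists ⊤. split; [apply HG | rewrite meet_comm, meet_top; apply le_refl].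
Qed.

Lemma maximal_filter_prime : prime_filter L G.
Proof.
  pose proof HG as [Gtop [Gup Gmeet]].
  split; [exact Gtop | split; [intro Gbot; exact (HGK _ Gbot (proj1 HK)) | split; [exact Gup|]]].
  split; [exact Gmeet|]. intros b c Hbc. apply NNPP. intro Hn. apply not_or_and in Hn as [Hb Hc].
  destruct (maximal_filter_escape b Hb) as [g [Hg Kb]].
  destruct (maximal_filter_escape c Hc) as [g' [Hg' Kc]].
  apply (HGK (g ⊓ g' ⊓ (b ⊔ c))); [apply Gmeet; [apply Gmeet|]; assumption|].
  rewrite meet_join_distr. apply HK.
  - apply HK with (g ⊓ b); [apply meet_mono; auto using le_meetl, le_refl | exact Kb].
  - apply HK with (g' ⊓ c); [apply meet_mono; auto using le_meetr, le_refl | exact Kc].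
Qed.

End MaximalFilter.

Theorem prime_filter_separation F K :
  is_filter F -> is_ideal L K -> (forall x, F x -> ~ K x) ->
  exists p, prime_filter L p /\ F ⊆ p /\ (forall x, p x -> ~ K x).
Proof.
  intros HF HK HFK.
  destruct (zorn_predicates (fun G => is_filter G /\ F ⊆ G /\ (forall x, G x -> ~ K x)) F)
    as [G [[HG [HFG HGK]] Hmax]].
  - split; [exact HF | split; [auto | exact HFK]].
  - intros C [G0 HG0] HC Hchain.
    split; [apply filter_chain_union; [exists G0; exact HG0 | apply HC | exact Hchain]|split].
    + intros x Fx. exists G0. split; [exact HG0 | apply (HC G0 HG0), Fx].
    + intros x [G [HG Gx]]. exact (proj2 (proj2 (HC G HG)) x Gx).
  - exists G. split; [|split; assumption].
    apply (maximal_filter_prime G K); try assumption.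
    intros H HH HGH HHK. apply Hmax; [| exact HGH]. split; [exact HH | split; auto].
Qed.

Lemma cofactor r a b : prime_filter L r -> r (a ∖ b) ->
  exists q, prime_filter L q /\ q ⊆ r /\ q a /\ ~ q b.
Proof.
  intros Hr Hab.
  destruct (prime_filter_separation (fun x => a ⊑ x)
              (ideal_join (fun x => ~ r x) (principal_ideal L b)))
    as [q [Hq [Haq Hdisj]]].
  - apply principal_filter_filter.
  - apply ideal_join_ideal; [apply prime_filter_compl_ideal, Hr | apply principal_ideal_ideal].
  - intros x Hax [c [b' [Hc [Hb' Hx]]]]. apply Hc, (prime_filter_up Hr (a ∖ b)); [|exact Hab].
    apply diff_le_iff, le_trans with x; [exact Hax|]. apply le_trans with (c ⊔ b'); [exact Hx|].
    rewrite join_comm. apply join_mono; [exact Hb' | apply le_refl].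
  - exists q. split; [exact Hq | split; [|split]].
    + intros x Hx. apply NNPP. intro Hrx.
      apply (Hdisj x Hx), ideal_join_l; [apply principal_ideal_ideal | exact Hrx].
    + apply Haq, le_refl.
    + intro Hb. apply (Hdisj b Hb), ideal_join_r;
        [apply prime_filter_compl_ideal, Hr | apply le_refl].
Qed.

(* The witness is [x ⊓ (e ∖ x)] for any [x] in [p] but not in [q]. *)
Lemma deep_element q p e :
  prime_filter L p -> prime_filter L q -> sincl q p -> q e ->
  exists d, p d /\ forall r, prime_filter L r -> r d ->
    exists q', prime_filter L q' /\ sincl q' r /\ q' e.
Proof.
  intros Hp Hq [Hqp [x [Hpx Hqx]]] He.
  assert (Hqd : q (e ∖ x)).
  { destruct (prime_filter_join Hq x (e ∖ x)) as [Hx | Hd]; [| contradiction | exact Hd].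
    exact (prime_filter_up Hq e _ (le_join_diff e x) He). }
  exists (x ⊓ e ∖ x). split; [apply (prime_filter_meet Hp); auto|].
  intros r Hr Hrd.
  destruct (cofactor r e x Hr (prime_filter_up Hr _ _ (le_meetr _ _) Hrd))
    as [q' [Hq' [Hq'r [Hq'e Hq'x]]]].
  exists q'. split; [exact Hq' | split; [split; [exact Hq'r|] | exact Hq'e]].
  exists x. split; [exact (prime_filter_up Hr _ _ (le_meetl _ _) Hrd) | exact Hq'x].
Qed.

Lemma not_height_le_deep N p : prime_filter L p -> ~ height_le L N p ->
  exists d, p d /\ forall r, prime_filter L r -> r d -> ~ height_le L N r.
Proof.
  revert p. induction N as [|N IH]; intros p Hp Hh.
  - assert (Hq : exists q, prime_filter L q /\ sincl q p).
    { apply NNPP. intro Hno. apply Hh. intros q Hq Hqp. apply Hno. eauto. }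
    destruct Hq as [q [Hq Hqp]].
    destruct (deep_element q p ⊤ Hp Hq Hqp (prime_filter_top Hq)) as [d [Hd Hdeep]].
    exists d. split; [exact Hd|]. intros r Hr Hrd Hrh.
    destruct (Hdeep r Hr Hrd) as [q' [Hq' [Hq'r _]]]. exact (Hrh q' Hq' Hq'r).
  - assert (Hq : exists q, prime_filter L q /\ sincl q p /\ ~ height_le L N q).
    { apply NNPP. intro Hno. apply Hh. intros q Hq Hqp. apply NNPP. intro Hqh. apply Hno. eauto. }
    destruct Hq as [q [Hq [Hqp Hqh]]].
    destruct (IH q Hq Hqh) as [e [He Hedeep]].
    destruct (deep_element q p e Hp Hq Hqp He) as [d [Hd Hdeep]].
    exists d. split; [exact Hd|]. intros r Hr Hrd Hrh.
    destruct (Hdeep r Hr Hrd) as [q' [Hq' [Hq'r Hq'e]]].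
    exact (Hedeep q' Hq' Hq'e (Hrh q' Hq' Hq'r)).
Qed.

Lemma height_le_of_codim N p :
  prime_filter L p -> (forall x, p x -> codim_le L x N) -> height_le L N p.
Proof.
  intros Hp Hcodim. apply NNPP. intro Hh.
  destruct (not_height_le_deep N p Hp Hh) as [d [Hd Hdeep]].
  destruct (Hcodim d Hd) as [r [Hr [Hrd Hrh]]]. exact (Hdeep r Hr Hrd Hrh).
Qed.

Lemma diff_filter I a : is_ideal L I -> is_filter (fun x => exists y, I y /\ a ∖ y ⊑ x).
Proof.
  intro HI. split; [|split].
  - exists ⊥. split; [apply HI | apply le_top].
  - intros x x' Hxx' [y [Hy Hx]]. exists y. split; [exact Hy | apply le_trans with x; assumption].
  - intros x x' [y [Hy Hx]] [y' [Hy' Hx']]. exists (y ⊔ y'). split; [apply HI; assumption|].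
    apply meet_ge; [apply le_trans with (a ∖ y) | apply le_trans with (a ∖ y')];
      auto using diff_antitone, le_joinl, le_joinr.
Qed.

(* Separate the filter generated by the [a ∖ y] (y ∈ I) from the ideal generated by
   I and the elements of codimension > N. *)
Lemma avoiding_prime_of_codim I a N :
  is_ideal L I -> (forall y, I y -> codim_le L (a ∖ y) N) ->
  exists p, prime_filter L p /\ (forall x, p x -> ~ I x) /\ p a /\ height_le L N p.
Proof.
  intros HI Hcodim.
  destruct (prime_filter_separation (fun x => exists y, I y /\ a ∖ y ⊑ x)
              (ideal_join I (fun x => ~ codim_le L x N)))
    as [p [Hp [Hap Hdisj]]].
  - apply diff_filter, HI.
  - apply ideal_join_ideal; [exact HI | apply codim_gt_ideal].
  - intros x [y [Hy Hyx]] [i [j [Hi [Hj Hx]]]]. apply Hj.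
    apply codim_le_up with (a ∖ (y ⊔ i)); [| apply Hcodim; apply HI; assumption].
    apply diff_le_iff, le_trans with (y ⊔ a ∖ y); [apply le_join_diff|].
    apply le_trans with (y ⊔ (i ⊔ j)); [| solve_join_le].
    apply join_mono; [apply le_refl | apply le_trans with x; assumption].
  - exists p. split; [exact Hp | split; [|split]].
    + intros x Hx Ix. apply (Hdisj x Hx), ideal_join_l; [apply codim_gt_ideal | exact Ix].
    + apply Hap. exists ⊥. split; [apply HI | apply diff_le].
    + apply height_le_of_codim; [exact Hp|]. intros x Hx. apply NNPP. intro Hn.
      apply (Hdisj x Hx), ideal_join_r; [exact HI | exact Hn].
Qed.

Lemma cball_open x N : copen L (cball L x N).
Proof.
  apply copen_iff_cball. intros w Hw. exists N. intros v Hv Hxv.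
  destruct (codim_le_join _ _ _ (codim_le_up _ _ N (symd_triangle x w v) Hxv));
    contradiction.
Qed.

Theorem Hausdorff_iff : Hausdorff L <-> forall a, a <> ⊥ -> exists n, codim_le L a n.
Proof.
  split.
  - intros HH a Ha. apply NNPP. intro Hinf.
    destruct (HH a ⊥ Ha) as [U [V [HU [HV [Ua [Vbot Hdisj]]]]]].
    destruct (proj1 (copen_iff_cball U) HU a Ua) as [N HN].
    apply (Hdisj ⊥). split; [| exact Vbot].
    apply HN. unfold cball. rewrite symd_bot. intro Ha'. eauto.
  - intros Hfin x y Hxy.
    destruct (Hfin (x △ y)) as [N HN]; [intro E; exact (Hxy (symd_eq_bot x y E))|].
    exists (cball L x N), (cball L y N).
    split; [apply cball_open | split; [apply cball_open | split; [| split]]];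
      try (unfold cball; rewrite symd_self; apply not_codim_le_bot).
    intros w [Hxw Hyw].
    destruct (codim_le_join _ _ _ (codim_le_up _ _ N (symd_triangle x w y) HN)) as [H | H];
      [exact (Hxw H) | apply Hyw; rewrite symd_comm; exact H].
Qed.

End Spectrum.

Section Quotient.
Context {T : Type} {L : CoHOps T} {HL : is_coHeyting L} (I : T -> Prop) (HI : is_ideal L I).

Local Notation "a ⊔ b" := (cjoin L a b) (at level 50, left associativity).
Local Notation "a ⊓ b" := (cmeet L a b) (at level 40, left associativity).
Local Notation "a ∖ b" := (cdiff L a b) (at level 35).
Local Notation "a ⊑ b" := (cle L a b) (at level 70).
Local Notation "⊥" := (cbot L).
Local Notation "⊤" := (ctop L).
Local Notation "a △ b" := (symd L a b) (at level 35).
Local Notation "a ≡ b" := (cong L I a b) (at level 70).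
Local Notation Q := (quot_ops L I).
Local Notation cls := (qcls L I).
Local Notation rep := (qrep L I).

Lemma join_slack a a' b b' i j :
  a ⊑ a' ⊔ i -> b ⊑ b' ⊔ j -> a ⊔ b ⊑ a' ⊔ b' ⊔ (i ⊔ j).
Proof.
  intros Ha Hb. apply le_trans with (a' ⊔ i ⊔ (b' ⊔ j));
    [apply join_mono; assumption | solve_join_le].
Qed.

Lemma meet_slack a a' b b' i j :
  a ⊑ a' ⊔ i -> b ⊑ b' ⊔ j -> a ⊓ b ⊑ a' ⊓ b' ⊔ (i ⊔ j).
Proof.
  intros Ha Hb. apply le_trans with ((a' ⊔ i) ⊓ (b' ⊔ j)); [apply meet_mono; assumption|].
  rewrite meet_join_distr. apply join_le; [|solve_join_le].
  rewrite meet_comm, meet_join_distr, (meet_comm b' a'). solve_join_le.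
Qed.

Lemma diff_slack a a' b b' i j :
  a ⊑ a' ⊔ i -> b' ⊑ b ⊔ j -> a ∖ b ⊑ a' ∖ b' ⊔ (i ⊔ j).
Proof.
  intros Ha Hb'. apply diff_le_iff, le_trans with (a' ⊔ i); [exact Ha|].
  apply le_trans with (b' ⊔ a' ∖ b' ⊔ i);
    [apply join_mono; [apply le_join_diff | apply le_refl]|].
  apply le_trans with (b ⊔ j ⊔ a' ∖ b' ⊔ i);
    [apply join_mono; [apply join_mono; [exact Hb' | apply le_refl] | apply le_refl]|].
  solve_join_le.
Qed.

Lemma cong_iff a b : a ≡ b <-> exists i, I i /\ a ⊑ b ⊔ i /\ b ⊑ a ⊔ i.
Proof.
  unfold cong. split.
  - intro Hab. exists (a △ b).
    split; [exact Hab | split; [apply le_join_symd | rewrite symd_comm; apply le_join_symd]].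
  - intros [i [Hi [Hab Hba]]]. apply HI with i; [| exact Hi].
    apply join_le; apply diff_le_iff; assumption.
Qed.

Lemma cong_refl a : a ≡ a.
Proof. unfold cong. rewrite symd_self. apply HI. Qed.

Lemma cong_sym a b : a ≡ b -> b ≡ a.
Proof. unfold cong. rewrite symd_comm. auto. Qed.

Lemma cong_trans a b c : a ≡ b -> b ≡ c -> a ≡ c.
Proof.
  rewrite !cong_iff. intros [i [Hi [Hab Hba]]] [j [Hj [Hbc Hcb]]].
  exists (i ⊔ j). split; [apply HI; assumption | split].
  - apply le_trans with (c ⊔ j ⊔ i); [|solve_join_le].
    apply le_trans with (b ⊔ i); [exact Hab | apply join_mono; [exact Hbc | apply le_refl]].
  - apply le_trans with (a ⊔ i ⊔ j); [|solve_join_le].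
    apply le_trans with (b ⊔ j); [exact Hcb | apply join_mono; [exact Hba | apply le_refl]].
Qed.

Lemma cong_join a a' b b' : a ≡ a' -> b ≡ b' -> a ⊔ b ≡ a' ⊔ b'.
Proof.
  rewrite !cong_iff. intros [i [Hi [Ha Ha']]] [j [Hj [Hb Hb']]].
  exists (i ⊔ j). split; [apply HI; assumption | split; apply join_slack; assumption].
Qed.

Lemma cong_meet a a' b b' : a ≡ a' -> b ≡ b' -> a ⊓ b ≡ a' ⊓ b'.
Proof.
  rewrite !cong_iff. intros [i [Hi [Ha Ha']]] [j [Hj [Hb Hb']]].
  exists (i ⊔ j). split; [apply HI; assumption | split; apply meet_slack; assumption].
Qed.

Lemma cong_diff a a' b b' : a ≡ a' -> b ≡ b' -> a ∖ b ≡ a' ∖ b'.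
Proof.
  rewrite !cong_iff. intros [i [Hi [Ha Ha']]] [j [Hj [Hb Hb']]].
  exists (i ⊔ j). split; [apply HI; assumption | split; apply diff_slack; assumption].
Qed.

Lemma qcls_eq a b : cls a = cls b <-> a ≡ b.
Proof.
  split.
  - intro E. pose proof (f_equal (fun X => proj1_sig X b) E) as Eb. simpl in Eb.
    rewrite Eb. apply cong_refl.
  - intro Hab. apply subset_eq_compat, functional_extensionality. intro x.
    apply propositional_extensionality.
    split; intro H; eauto using cong_trans, cong_sym.
Qed.

Lemma qcls_qrep X : cls (rep X) = X.
Proof.
  destruct X as [C HC]. unfold qrep. simpl.
  destruct constructive_indefinite_description as [a Ha]. simpl.
  apply subset_eq_compat. symmetry. exact Ha.
Qed.

Lemma quot_ind (P : quot L I -> Prop) : (forall a, P (cls a)) -> forall X, P X.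
Proof. intros HP X. rewrite <- (qcls_qrep X). apply HP. Qed.

Lemma qrep_qcls a : rep (cls a) ≡ a.
Proof. apply qcls_eq, qcls_qrep. Qed.

Lemma qjoin a b : cjoin Q (cls a) (cls b) = cls (a ⊔ b).
Proof. apply qcls_eq, cong_join; apply qrep_qcls. Qed.

Lemma qmeet a b : cmeet Q (cls a) (cls b) = cls (a ⊓ b).
Proof. apply qcls_eq, cong_meet; apply qrep_qcls. Qed.

Lemma qdiff a b : cdiff Q (cls a) (cls b) = cls (a ∖ b).
Proof. apply qcls_eq, cong_diff; apply qrep_qcls. Qed.

Lemma qle a b : cle Q (cls a) (cls b) <-> exists i, I i /\ a ⊑ b ⊔ i.
Proof.
  unfold cle at 1. rewrite qjoin, qcls_eq, cong_iff. split.
  - intros [i [Hi [H _]]]. exists i.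
    split; [exact Hi | apply le_trans with (a ⊔ b); [apply le_joinl | exact H]].
  - intros [i [Hi H]]. exists i.
    split; [exact Hi | split; [apply join_le; [exact H | apply le_joinl] | solve_join_le]].
Qed.

Lemma qcls_mono a b : a ⊑ b -> cle Q (cls a) (cls b).
Proof. intro Hab. apply qle. exists ⊥. split; [apply HI | rewrite join_bot; exact Hab]. Qed.

Lemma quot_coHeyting : is_coHeyting Q.
Proof.
  unfold is_coHeyting; repeat match goal with |- _ /\ _ => split end; intros;
    repeat match goal with X : quot L I |- _ => induction X using quot_ind end;
    change (cbot Q) with (cls ⊥); change (ctop Q) with (cls ⊤);
    repeat (rewrite qjoin || rewrite qmeet || rewrite qdiff); try (f_equal; apply HL).
  split; [apply qcls_mono, le_join_diff|].
  intro C. induction C using quot_ind. rewrite qjoin, !qle.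
  intros [i [Hi H]]. exists i. split; [exact Hi|].
  apply diff_le_iff. rewrite join_assoc. exact H.
Qed.

Lemma qcls_surj X : exists a, X = cls a.
Proof. exists (rep X). symmetry. apply qcls_qrep. Qed.

Lemma qcls_eq_bot a : cls a = cbot Q <-> I a.
Proof.
  change (cbot Q) with (cls ⊥). rewrite qcls_eq. unfold cong. rewrite symd_bot. reflexivity.
Qed.

Lemma pullback_prime P : prime_filter Q P ->
  prime_filter L (fun a => P (cls a)) /\ (forall a, P (cls a) -> ~ I a).
Proof.
  intro HP. split; [split; [|split; [|split; [|split]]]|].
  - exact (prime_filter_top HP).
  - exact (prime_filter_not_bot HP).
  - intros a b Hab. apply (prime_filter_up HP), qcls_mono, Hab.
  - intros a b Ha Hb. rewrite <- qmeet. apply (prime_filter_meet HP); assumption.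
  - intros a b Hab. rewrite <- qjoin in Hab. exact (prime_filter_join HP _ _ Hab).
  - intros a Ha Ia. apply (prime_filter_not_bot HP).
    rewrite <- (proj2 (qcls_eq_bot a) Ia). exact Ha.
Qed.

Lemma avoiding_prime_cong p a b :
  prime_filter L p -> (forall x, p x -> ~ I x) -> a ≡ b -> p a -> p b.
Proof.
  intros Hp HpI Hab Ha. apply cong_iff in Hab as [i [Hi [Hab _]]].
  destruct (prime_filter_join Hp b i (prime_filter_up Hp a _ Hab Ha)) as [Hb | Hpi];
    [exact Hb | exfalso; exact (HpI i Hpi Hi)].
Qed.

Lemma pushforward_prime p : prime_filter L p -> (forall x, p x -> ~ I x) ->
  prime_filter Q (fun X => p (rep X)) /\ (fun a => p (rep (cls a))) = p.
Proof.
  intros Hp HpI.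
  assert (Hrep : forall a, p (rep (cls a)) <-> p a).
  { intro a. split; apply (avoiding_prime_cong p _ _ Hp HpI);
      [apply qrep_qcls | apply cong_sym, qrep_qcls]. }
  split; [split; [|split; [|split; [|split]]]|].
  - apply Hrep, (prime_filter_top Hp).
  - intro H. apply (prime_filter_not_bot Hp), Hrep, H.
  - intros X Y. induction X using quot_ind. induction Y using quot_ind.
    rewrite qle, !Hrep. intros [i [Hi Hab]] Ha.
    destruct (prime_filter_join Hp _ _ (prime_filter_up Hp _ _ Hab Ha)) as [Hb | Hpi];
      [exact Hb | exfalso; exact (HpI i Hpi Hi)].
  - intros X Y. induction X using quot_ind. induction Y using quot_ind.
    rewrite qmeet, !Hrep. apply (prime_filter_meet Hp).
  - intros X Y. induction X using quot_ind. induction Y using quot_ind.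
    rewrite qjoin, !Hrep. apply (prime_filter_join Hp).
  - apply functional_extensionality. intro a. apply propositional_extensionality, Hrep.
Qed.

Lemma height_le_quot n P :
  prime_filter Q P -> (height_le Q n P <-> height_le L n (fun a => P (cls a))).
Proof.
  revert n P. apply (height_le_transfer L Q (fun P a => P (cls a))).
  - intros P HP. apply (pullback_prime P HP).
  - intros P P'. apply sincl_pullback, qcls_surj.
  - intros P q HP Hq [Hqsub _]. exists (fun X => q (rep X)).
    destruct (pushforward_prime q Hq (fun x Hx => proj2 (pullback_prime P HP) x (Hqsub x Hx)))
      as [HQ Heq].
    split; [exact HQ | symmetry; exact Heq].
Qed.

Lemma codim_le_quot a n : codim_le Q (cls a) n <->
  exists p, prime_filter L p /\ (forall x, p x -> ~ I x) /\ p a /\ height_le L n p.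
Proof.
  split.
  - intros [P [HP [Ha Hh]]]. destruct (pullback_prime P HP) as [Hp HpI].
    exists (fun x => P (cls x)). split; [exact Hp | split; [exact HpI | split; [exact Ha|]]].
    apply height_le_quot; assumption.
  - intros [p [Hp [HpI [Ha Hh]]]]. destruct (pushforward_prime p Hp HpI) as [HP Heq].
    exists (fun X => p (rep X)). split; [exact HP | split].
    + rewrite <- Heq in Ha. exact Ha.
    + apply height_le_quot; [exact HP|]. cbv beta. rewrite Heq. exact Hh.
Qed.

Theorem Hausdorff_quot_iff : Hausdorff Q <-> forall a, ~ I a ->
  exists n p, prime_filter L p /\ (forall x, p x -> ~ I x) /\ p a /\ height_le L n p.
Proof.
  rewrite (@Hausdorff_iff _ Q quot_coHeyting). split.
  - intros H a Ia. destruct (H (cls a)) as [n Hn]; [rewrite qcls_eq_bot; exact Ia|].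
    exists n. apply codim_le_quot, Hn.
  - intros H X. induction X using quot_ind. rewrite qcls_eq_bot. intro Ia.
    destruct (H a Ia) as [n Hn]. exists n. apply codim_le_quot, Hn.
Qed.

End Quotient.

Section Closedness.
Context {T : Type} {L : CoHOps T} {HL : is_coHeyting L}.

Lemma closed_of_avoiding_primes (I : T -> Prop) :
  (forall a, ~ I a -> exists n p,
     prime_filter L p /\ (forall x, p x -> ~ I x) /\ p a /\ height_le L n p) ->
  cclosed L I.
Proof.
  intro H. apply copen_iff_cball. intros x Ix.
  destruct (H x Ix) as [n [p [Hp [HpI [Hpx Hh]]]]].
  exists n. intros y Hxy Iy. apply Hxy. exists p. split; [exact Hp | split; [|exact Hh]].
  destruct (prime_filter_join Hp y (symd L x y) (prime_filter_up Hp x _ (le_join_symd x y) Hpx))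
    as [Hy | Hd]; [exfalso; exact (HpI y Hy Iy) | exact Hd].
Qed.

Lemma avoiding_primes_of_closed (I : T -> Prop) :
  is_ideal L I -> cclosed L I ->
  forall a, ~ I a -> exists n p,
    prime_filter L p /\ (forall x, p x -> ~ I x) /\ p a /\ height_le L n p.
Proof.
  intros HI Hclosed a Ia. destruct (proj1 (copen_iff_cball _) Hclosed a Ia) as [N HN].
  exists N. apply avoiding_prime_of_codim; [exact HI|].
  intros y Iy. apply codim_le_up with (symd L a (cmeet L a y)); [apply symd_meet_le|].
  apply NNPP. intro Hn. apply (HN _ Hn). apply HI with y; [apply le_meetr | exact Iy].
Qed.

Theorem Hausdorff_quot_iff_closed (I : T -> Prop) :
  is_ideal L I -> (Hausdorff (quot_ops L I) <-> cclosed L I).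
Proof.
  intro HI. rewrite (Hausdorff_quot_iff I HI).
  split; [apply closed_of_avoiding_primes | apply avoiding_primes_of_closed, HI].
Qed.

Lemma principal_ideal_closed c : Hausdorff L -> cclosed L (principal_ideal L c).
Proof.
  intro HH. apply copen_iff_cball. intros x Hxc.
  destruct (proj1 Hausdorff_iff HH (cdiff L x c)) as [n Hn].
  { intro E. apply Hxc. unfold principal_ideal. rewrite <- (join_bot c).
    apply diff_le_iff. rewrite E. apply le_refl. }
  exists n. intros y Hxy Hyc. apply Hxy, codim_le_up with (cdiff L x c); [|exact Hn].
  apply le_trans with (cdiff L x y); [apply diff_antitone, Hyc | apply le_joinl].
Qed.

End Closedness.

Theorem proposition4p4 (T : Type) (L : CoHOps T) :
  is_coHeyting L -> Hausdorff L ->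
  (forall I : T -> Prop, is_ideal L I ->
     (Hausdorff (quot_ops L I) <-> cclosed L I)) /\
  (forall a : T, Hausdorff (quot_ops L (principal_ideal L a))).
Proof.
  intros HL HH. split.
  - intros I HI. apply Hausdorff_quot_iff_closed, HI.
  - intro c. apply Hausdorff_quot_iff_closed;
      [apply principal_ideal_ideal | apply principal_ideal_closed, HH].
Qed.
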